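(* Let $G=\mathrm{SL}_3(\mathbb C)$, $B$ the upper-triangular, $U$ the upper unitriangular and $T$ the diagonal matrices in $G$. Let $H$ be the group of matrices $\begin{pmatrix} t&0&a\\0&1&b\\0&0&t^{-1}\end{pmatrix}$ with $a,b\in\mathbb C$, $t\in\mathbb C^\times$, and let $N$ be its subgroup with $t=1$. Then $H$ is a connected solvable spherical subgroup of $G$, $N_G(H)=T\ltimes N$, and $N_G(N_G(H))=N_G(H)\cup\rho N_G(H)$ where $\rho=\begin{pmatrix}0&1&0\\1&0&0\\0&0&-1\end{pmatrix}$. In particular $N_G(N_G(H))\neq N_G(H)$.
   Context: A closed subgroup $H\subset G$ of an algebraic group $G$ is spherical if a Borel subgroup of $G$ has an open orbit on $G/H$. $N_G(K)$ denotes the normalizer of $K$ in $G$. *)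

From HB Require Import structures.
From mathcomp Require Import all_boot all_order all_algebra.
Set Implicit Arguments. Unset Strict Implicit. Unset Printing Implicit Defensive.
Import GRing.Theory.
Local Open Scope ring_scope.

Section SL3.
Variable F : fieldType.

Definition mset := 'M[F]_3 -> Prop.

Definition SL3 : mset := fun A => \det A = 1.

Definition mk3 (a b c d e f g h i : F) : 'M[F]_3 :=
  \matrix_(r < 3, s < 3)
    nth 0 (nth [::] [:: [:: a; b; c]; [:: d; e; f]; [:: g; h; i]] r) s.

Inductive mpoly : Type :=
| PVar of 'I_3 & 'I_3
| PConst of F
| PAdd of mpoly & mpoly
| PMul of mpoly & mpoly.

Fixpoint peval (p : mpoly) (A : 'M[F]_3) : F :=
  match p with
  | PVar i j => A i j
  | PConst c => c
  | PAdd p q => peval p A + peval q A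
  | PMul p q => peval p A * peval q A
  end.

(* Zariski-closed subsets of G = SL3(F): common zero loci in G of a family of
   polynomials in the matrix entries *)
Definition zclosed (S : mset) : Prop :=
  exists P : mpoly -> Prop,
    forall A, S A <-> (SL3 A /\ forall p, P p -> peval p A = 0).

Definition zopen (S : mset) : Prop :=
  (forall A, S A -> SL3 A) /\ zclosed (fun A => SL3 A /\ ~ S A).

Definition msubset (S1 S2 : mset) : Prop := forall A, S1 A -> S2 A.
Definition mseteq (S1 S2 : mset) : Prop := forall A, S1 A <-> S2 A.

Definition subgroup (K : mset) : Prop :=
  msubset K SL3 /\ K 1%:M /\
  (forall x y, K x -> K y -> K (x *m y)) /\
  (forall x, K x -> K (invmx x)).

Definition closed_subgroup (K : mset) : Prop := subgroup K /\ zclosed K.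

(* connectedness for the Zariski topology (subspace topology on K) *)
Definition zconnected (K : mset) : Prop :=
  forall Z1 Z2 : mset, zclosed Z1 -> zclosed Z2 ->
    (forall x, K x -> Z1 x \/ Z2 x) ->
    (forall x, K x -> Z1 x -> Z2 x -> False) ->
    msubset K Z1 \/ msubset K Z2.

Inductive gen (S : mset) : mset :=
| gen_one : gen S 1%:M
| gen_in x : S x -> gen S x
| gen_mul x y : gen S x -> gen S y -> gen S (x *m y)
| gen_inv x : gen S x -> gen S (invmx x).

Definition commutator (x y : 'M[F]_3) : 'M[F]_3 :=
  invmx x *m invmx y *m x *m y.

Definition derived (K : mset) : mset :=
  gen (fun z => exists x y, K x /\ K y /\ z = commutator x y).

Definition solvable_grp (K : mset) : Prop :=
  exists n, msubset (iter n derived K) (fun z => z = 1%:M).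

Definition borel (Bo : mset) : Prop :=
  closed_subgroup Bo /\ zconnected Bo /\ solvable_grp Bo /\
  forall K, closed_subgroup K -> zconnected K -> solvable_grp K ->
    msubset Bo K -> mseteq K Bo.

(* The orbit of Bo through gH in G/H, pulled back to G, is the double coset
   Bo g H; G/H carries the quotient topology of G -> G/H. *)
Definition spherical (H : mset) : Prop :=
  closed_subgroup H /\
  exists Bo, borel Bo /\ exists g, SL3 g /\
    zopen (fun A => exists b h, Bo b /\ H h /\ A = b *m g *m h).

Definition normalizer (K : mset) : mset :=
  fun g => SL3 g /\ forall x, K x <-> K (g *m x *m invmx g).

Definition Tdiag : mset :=
  fun A => SL3 A /\ forall i j : 'I_3, i != j -> A i j = 0.

Definition Hgrp : mset :=
  fun A => exists t a b : F, t != 0 /\ A = mk3 t 0 a 0 1 b 0 0 t^-1.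

Definition Ngrp : mset :=
  fun A => exists a b : F, A = mk3 1 0 a 0 1 b 0 0 1.

Definition rho : 'M[F]_3 := mk3 0 1 0 1 0 0 0 0 (-1).

Definition is_semidirect (M T N : mset) : Prop :=
  mseteq M (fun A => exists t n, T t /\ N n /\ A = t *m n) /\
  (forall x, T x -> N x -> x = 1%:M) /\
  (forall t n, T t -> N n -> N (t *m n *m invmx t)).

End SL3.

From HB Require Import structures.
From mathcomp Require Import all_boot all_order all_algebra.
From mathcomp Require Import ring.
From Stdlib Require Import Classical.
Import GRing.Theory.
Local Open Scope ring_scope.
Set Implicit Arguments. Unset Strict Implicit. Unset Printing Implicit Defensive.

(* Then:
   - B (upper triangular) is a closed connected solvable subgroup, maximal
     among solvable subgroups because any larger subgroup contains, by a
     Bruhat-type reduction, a root subgroup opposite to one of B, hence a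
     copy of SL_2; so B is a Borel subgroup;
   - H <= B is closed, connected (segments in coordinates) and solvable;
   - an element normalizing H (resp. M = T N) has zero bottom row off the
     diagonal, because it conjugates N into B, and conjugating the torus
     element diag(2, 1, 1/2) pins down the remaining entries; this gives
     N_G(H) = M and N_G(M) = M u rho M;
   - B g0 H is the open set where A21 A20 (A11 A20 - A21 A10) does not
     vanish, so H is spherical. *)

Notation i0 := (@Ordinal 3 0 isT).
Notation i1 := (@Ordinal 3 1 isT).
Notation i2 := (@Ordinal 3 2 isT).

Lemma ord3P (P : 'I_3 -> Prop) : P i0 -> P i1 -> P i2 -> forall i, P i.
Proof.
move=> P0 P1 P2 [[|[|[|i]]] Hi] //; by rewrite (bool_irrelevance Hi isT).
Qed.

Section Coordinates.
Variable F : fieldType.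

Lemma mk3E (A : 'M[F]_3) :
  A = mk3 (A i0 i0) (A i0 i1) (A i0 i2) (A i1 i0) (A i1 i1) (A i1 i2)
          (A i2 i0) (A i2 i1) (A i2 i2).
Proof. by apply/matrixP => i j; rewrite mxE; elim/ord3P: i; elim/ord3P: j. Qed.

Lemma mk3_mul (a b c d e f g h i a' b' c' d' e' f' g' h' i' : F) :
  mk3 a b c d e f g h i *m mk3 a' b' c' d' e' f' g' h' i' =
  mk3 (a*a' + b*d' + c*g') (a*b' + b*e' + c*h') (a*c' + b*f' + c*i')
      (d*a' + e*d' + f*g') (d*b' + e*e' + f*h') (d*c' + e*f' + f*i')
      (g*a' + h*d' + i*g') (g*b' + h*e' + i*h') (g*c' + h*f' + i*i').
Proof.
apply/matrixP => r s; rewrite !mxE !big_ord_recr big_ord0 /= !mxE /=.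
by elim/ord3P: r; elim/ord3P: s; rewrite /= add0r.
Qed.

Lemma det_mk3 (a b c d e f g h i : F) :
  \det (mk3 a b c d e f g h i) =
  a*e*i - a*f*h - b*d*i + b*f*g + c*d*h - c*e*g.
Proof.
rewrite (expand_det_row _ i0) !big_ord_recr big_ord0 /= /cofactor.
rewrite !(expand_det_row _ ord0) !big_ord_recr big_ord0 /= /cofactor.
rewrite !(expand_det_row _ ord0) !big_ord_recr !big_ord0 /= /cofactor.
by rewrite !det_mx00 !mxE /=; ring.
Qed.

Lemma mk3_1 : 1%:M = mk3 1 0 0 0 1 0 0 0 (1 : F).
Proof. by apply/matrixP => i j; rewrite !mxE; elim/ord3P: i; elim/ord3P: j. Qed.

Lemma mk3_inj (a b c d e f g h i a' b' c' d' e' f' g' h' i' : F) :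
  mk3 a b c d e f g h i = mk3 a' b' c' d' e' f' g' h' i' ->
  [/\ a = a', b = b', c = c', d = d' & [/\ e = e', f = f', g = g', h = h' & i = i']].
Proof.
move=> E; have Q r s : mk3 a b c d e f g h i r s = mk3 a' b' c' d' e' f' g' h' i' r s.
  by rewrite E.
move: (Q i0 i0) (Q i0 i1) (Q i0 i2) (Q i1 i0) (Q i1 i1) (Q i1 i2) (Q i2 i0)
  (Q i2 i1) (Q i2 i2); by rewrite !mxE.
Qed.

Lemma invmx_eq (A B : 'M[F]_3) : A *m B = 1%:M -> invmx A = B.
Proof.
move=> AB; have [uA _] := mulmx1_unit AB.
by rewrite -[RHS](mulKmx uA) AB mulmx1.
Qed.

Lemma SL3_unit (A : 'M[F]_3) : SL3 A -> A \in unitmx.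
Proof. by rewrite /SL3 unitmxE => ->; rewrite unitr1. Qed.

Lemma SL3_mul (A B : 'M[F]_3) : SL3 A -> SL3 B -> SL3 (A *m B).
Proof. by rewrite /SL3 det_mulmx => -> ->; rewrite mulr1. Qed.

Lemma invmxM_SL3 (A B : 'M[F]_3) : SL3 A -> SL3 B ->
  invmx (A *m B) = invmx B *m invmx A.
Proof.
move=> SA SB; apply: invmx_eq.
by rewrite mulmxA mulmxK ?SL3_unit // mulmxV ?SL3_unit.
Qed.

Lemma eq_of_diff (l r L R : F) : L = R -> l - r = L - R \/ l - r = R - L -> l = r.
Proof. by move=> -> [] /eqP; rewrite subrr subr_eq0 => /eqP. Qed.

Lemma rinv_neq0 (x y : F) : x * y = 1 -> y != 0.
Proof. by move=> xy; apply/eqP => y0; move: xy; rewrite y0 mulr0 => /eqP; rewrite eq_sym oner_eq0. Qed.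

End Coordinates.

Ltac field_nz := field; do ?[apply/andP; split];
  first [done | exact: oner_neq0 | rewrite ?mulf_neq0 ?invr_eq0 ?oppr_eq0 //].

(* Derive [l = r] from an equation [E : L = R] with [l - r = +-(L - R)]. *)
Ltac from_diff E := apply: (eq_of_diff E); first [left; ring | right; ring].

Section SubgroupFacts.
Variable F : fieldType.
Implicit Types (K S : mset F) (g x y : 'M[F]_3).

Lemma subgroup_conj K w u Y :
  subgroup K -> K w -> K u -> w *m u = Y *m w -> K Y.
Proof.
move=> [sub [_ [mul inv]]] Kw Ku E.
have -> : Y = w *m u *m invmx w by rewrite E mulmxK //; apply/SL3_unit/sub.
exact: mul _ _ (mul _ _ Kw Ku) (inv _ Kw).
Qed.

Lemma normalizer_conj K g x :
  normalizer K g -> K x -> exists2 y, K y & g *m x = y *m g.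
Proof.
case=> Sg Ng Kx; exists (g *m x *m invmx g); first exact: (proj1 (Ng x) Kx).
by rewrite mulmxKV // SL3_unit.
Qed.

Lemma normalizer_of_stable S K :
  (forall g, S g -> SL3 g) -> (forall g, S g -> S (invmx g)) ->
  (forall g x, S g -> K x -> K (g *m x *m invmx g)) ->
  forall g, S g -> normalizer K g.
Proof.
move=> SG Sinv Sconj g Sg; split; first exact: SG.
move=> x; split; first exact: Sconj.
move/(Sconj _ _ (Sinv _ Sg)); have ug : g \in unitmx := SL3_unit (SG _ Sg).
by rewrite invmxK !mulmxA mulVmx // mul1mx mulmxKV.
Qed.

Lemma normalizer_ext K K' : mseteq K K' -> mseteq (normalizer K) (normalizer K').
Proof.
move=> E g; split; case=> Sg Ng; split=> // x; first by rewrite -!E.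
by rewrite !E.
Qed.

Lemma gen_sub S K :
  msubset S K -> K 1%:M -> (forall x y, K x -> K y -> K (x *m y)) ->
  (forall x, K x -> K (invmx x)) -> msubset (gen S) K.
Proof. by move=> sSK K1 Kmul Kinv x; elim=> //; auto. Qed.

Lemma derived_mono K K' : msubset K K' -> msubset (derived K) (derived K').
Proof.
move=> sKK'; apply: gen_sub.
- by move=> z [x [y [Kx [Ky ->]]]]; apply: gen_in; exists x, y; auto.
- exact: gen_one.
- exact: gen_mul.
- exact: gen_inv.
Qed.

Lemma solvable_sub K K' : msubset K K' -> solvable_grp K' -> solvable_grp K.
Proof.
move=> sKK' [n sn]; exists n => x Kx; apply: sn.
by elim: n x Kx => //= n IH; apply: derived_mono.
Qed.

Lemma derived_trivial K :
  (forall x y, K x -> K y -> commutator x y = 1%:M) ->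
  msubset (derived K) (fun z => z = 1%:M).
Proof.
move=> Kcomm; apply: gen_sub => //.
- by move=> z [x [y [Kx [Ky ->]]]]; apply: Kcomm.
- by move=> x y -> ->; rewrite mulmx1.
- by move=> x ->; rewrite invmx1.
Qed.

(* The SL_2 obstruction to solvability: if [K] contains two one-parameter
   families [U] and [L] generating an element [hm] such that every [U y]
   (resp. [L y]) is a commutator of [hm] with some [U z] (resp. [L z]), then
   every term of the derived series contains [U] and [L]; as [U 1 <> 1],
   the series never reaches the trivial group. *)
Lemma nonsolvable_of_perfect_pair K (U L : F -> 'M[F]_3) (hm : 'M[F]_3) :
  subgroup K -> (forall t, K (U t)) -> (forall t, K (L t)) -> U 1 <> 1%:M ->
  (forall S, (forall t, S (U t)) -> (forall t, S (L t)) ->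
      (forall x y, S x -> S y -> S (x *m y)) -> S hm) ->
  (forall t, exists t', U t = commutator hm (U t')) ->
  (forall t, exists t', L t = commutator hm (L t')) ->
  ~ solvable_grp K.
Proof.
move=> sK KU KL U1 gen_hm commU commL [n sn].
suff /(_ n) [/(_ 1) /sn] : forall m,
   [/\ forall t, iter m (@derived F) K (U t), forall t, iter m (@derived F) K (L t) &
       forall x y, iter m (@derived F) K x -> iter m (@derived F) K y ->
                   iter m (@derived F) K (x *m y)] by [].
elim=> [|m [IU IL IM]] /=; first by split=> //; case: sK => _ [_ []].
have Dhm := gen_hm _ IU IL IM.
split=> [t|t|x y]; last exact: gen_mul.
- by have [t' ->] := commU t; apply: gen_in; exists hm, (U t').
- by have [t' ->] := commL t; apply: gen_in; exists hm, (L t').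
Qed.

End SubgroupFacts.

Section RationalCurves.
Variable F : fieldType.
Implicit Types (D q : {poly F}) (K : mset F).

(* [f] agrees, where [D] does not vanish, with a polynomial divided by a power
   of [D]: it is a regular function on the open set [D <> 0]. *)
Definition rational_on D (f : F -> F) : Prop :=
  exists q n, forall s, D.[s] != 0 -> f s * D.[s] ^+ n = q.[s].

Lemma rational_on_poly D q (f : F -> F) : (forall s, f s = q.[s]) -> rational_on D f.
Proof. by move=> E; exists q, 0%N => s _; rewrite expr0 mulr1 E. Qed.

Lemma rational_on_inv D (f : F -> F) :
  (forall s, D.[s] != 0 -> f s = D.[s]^-1) -> rational_on D f.
Proof. by move=> E; exists 1, 1%N => s Ds; rewrite E // expr1 mulVf // hornerE. Qed.

Lemma rational_on_peval D (gam : F -> 'M[F]_3) :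
  (forall i j, rational_on D (fun s => gam s i j)) ->
  forall p, rational_on D (fun s => peval p (gam s)).
Proof.
move=> entries; elim=> [i j|c|p1 [q1 [n1 E1]] p2 [q2 [n2 E2]]|p1 [q1 [n1 E1]] p2 [q2 [n2 E2]]] /=.
- exact: entries.
- by apply: (@rational_on_poly _ c%:P) => s; rewrite hornerC.
- exists (q1 * D ^+ n2 + q2 * D ^+ n1), (n1 + n2)%N => s Ds.
  by rewrite !hornerE -E1 // -E2 // exprD; ring.
- exists (q1 * q2), (n1 + n2)%N => s Ds.
  by rewrite !hornerE -E1 // -E2 // exprD; ring.
Qed.

Definition rational_curve K (h0 h1 : 'M[F]_3) : Prop :=
  exists D (gam : F -> 'M[F]_3),
    [/\ D.[0] != 0, D.[1] != 0, gam 0 = h0, gam 1 = h1 &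
     (forall s, D.[s] != 0 -> K (gam s)) /\
     (forall i j, rational_on D (fun s => gam s i j))].

Lemma zclosed_witness (Z : mset F) (P : mpoly F -> Prop) x :
  (forall A, Z A <-> SL3 A /\ forall p, P p -> peval p A = 0) ->
  SL3 x -> ~ Z x -> exists2 p, P p & peval p x != 0.
Proof.
move=> defZ Sx nZx; apply: NNPP => none; apply/nZx/defZ; split=> // p Pp.
by apply: NNPP => nz; apply: none; exists p => //; apply/eqP.
Qed.

Definition segment (x y : F) : {poly F} := x%:P + 'X * (y - x)%:P.

Lemma segmentE (x y s : F) : (segment x y).[s] = x + s * (y - x).
Proof. by rewrite /segment !hornerE. Qed.

Lemma segment0 (x y : F) : (segment x y).[0] = x.
Proof. by rewrite segmentE mul0r addr0. Qed.

Lemma segment1 (x y : F) : (segment x y).[1] = y.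
Proof. by rewrite segmentE mul1r addrC subrK. Qed.

Definition tri (d0 d1 u v w : F) : 'M[F]_3 := mk3 d0 u v 0 d1 w 0 0 (d0 * d1)^-1.

Lemma triangular_segment K (d0 d1 u v w d0' d1' u' v' w' : F) :
  d0 != 0 -> d1 != 0 -> d0' != 0 -> d1' != 0 ->
  (forall s, (segment d0 d0').[s] != 0 -> (segment d1 d1').[s] != 0 ->
     K (tri (segment d0 d0').[s] (segment d1 d1').[s] (segment u u').[s]
            (segment v v').[s] (segment w w').[s])) ->
  rational_curve K (tri d0 d1 u v w) (tri d0' d1' u' v' w').
Proof.
move=> d00 d10 d00' d10' Kseg; pose D := segment d0 d0' * segment d1 d1'.
exists D, (fun s => tri (segment d0 d0').[s] (segment d1 d1').[s] (segment u u').[s]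
                        (segment v v').[s] (segment w w').[s]).
rewrite /D !hornerM !segment0 !segment1 !mulf_neq0 //; split=> //; split.
  by move=> s; rewrite hornerM mulf_eq0 negb_or => /andP []; apply: Kseg.
move=> i j; elim/ord3P: i; elim/ord3P: j; rewrite /tri.
all: first [ apply: rational_on_inv => s _; by rewrite mxE hornerM
           | apply: (@rational_on_poly _ 0) => s; by rewrite mxE /= horner0
           | apply: (@rational_on_poly _ (segment d0 d0')) => s; by rewrite mxE
           | apply: (@rational_on_poly _ (segment d1 d1')) => s; by rewrite mxE
           | apply: (@rational_on_poly _ (segment u u')) => s; by rewrite mxE
           | apply: (@rational_on_poly _ (segment v v')) => s; by rewrite mxE
           | apply: (@rational_on_poly _ (segment w w')) => s; by rewrite mxE ].
Qed.

End RationalCurves.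

(* The affine line minus the roots of [D] is irreducible; hence a set in which
   any two points are joined by a rational curve is connected. *)
Lemma zconnected_of_curves (Fc : closedFieldType) (K : mset Fc) :
  (forall h0 h1, K h0 -> K h1 -> rational_curve K h0 h1) -> zconnected K.
Proof.
move=> curves Z1 Z2 [P1 defZ1] [P2 defZ2] cover _.
apply: NNPP => /not_or_and [nsub1 nsub2].
have [h0 [K0 nZ0]] : exists h0, K h0 /\ ~ Z1 h0.
  by apply: NNPP => none; apply: nsub1 => x Kx; apply: NNPP => nz; apply: none; exists x.
have [h1 [K1 nZ1]] : exists h1, K h1 /\ ~ Z2 h1.
  by apply: NNPP => none; apply: nsub2 => x Kx; apply: NNPP => nz; apply: none; exists x.
have inG x : K x -> SL3 x.
  by case/cover => [/defZ1 [] | /defZ2 []].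
have [p1 P1p1 p1h0] := zclosed_witness defZ1 (inG _ K0) nZ0.
have [p2 P2p2 p2h1] := zclosed_witness defZ2 (inG _ K1) nZ1.
have [D [gam [D0 D1 gam0 gam1 [Kgam entries]]]] := curves _ _ K0 K1.
have [q1 [m1 E1]] := rational_on_peval entries p1.
have [q2 [m2 E2]] := rational_on_peval entries p2.
have q1_neq0 : q1 != 0.
  apply: contraNneq p1h0 => q0; move: (E1 0 D0); rewrite q0 horner0 gam0 => /eqP.
  by rewrite mulf_eq0 expf_eq0 (negbTE D0) andbF orbF.
have q2_neq0 : q2 != 0.
  apply: contraNneq p2h1 => q0; move: (E2 1 D1); rewrite q0 horner0 gam1 => /eqP.
  by rewrite mulf_eq0 expf_eq0 (negbTE D1) andbF orbF.
have D_neq0 : D != 0 by apply: contraNneq D0 => ->; rewrite horner0.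
have /closed_nonrootP [s] := mulf_neq0 (mulf_neq0 q1_neq0 q2_neq0) D_neq0.
rewrite /root !hornerE !mulf_eq0 !negb_or => /andP [/andP [q1s q2s] Ds].
case/cover: (Kgam _ Ds) => [/defZ1 [_ /(_ _ P1p1) z] | /defZ2 [_ /(_ _ P2p2) z]].
  by move: q1s; rewrite -E1 // z mul0r eqxx.
by move: q2s; rewrite -E2 // z mul0r eqxx.
Qed.

Section Borel.
Variable F : fieldType.

Definition Bgrp : mset F :=
  fun A => SL3 A /\ A i1 i0 = 0 /\ A i2 i0 = 0 /\ A i2 i1 = 0.

Definition Ugrp : mset F := fun A => exists x y z, A = mk3 1 x y 0 1 z 0 0 1.
Definition Zgrp : mset F := fun A => exists c, A = mk3 1 0 c 0 1 0 0 0 1.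

Lemma Bgrp_param (A : 'M[F]_3) :
  Bgrp A <-> exists d0 d1 u v w, [/\ d0 != 0, d1 != 0 & A = tri d0 d1 u v w].
Proof.
split=> [[SA [A10 [A20 A21]]] | [d0 [d1 [u [v [w [d0_neq0 d1_neq0 ->]]]]]]]; last first.
  by split; [rewrite /SL3 /tri det_mk3; field_nz | rewrite !mxE].
move: SA; rewrite /SL3 [A]mk3E det_mk3 A10 A20 A21 => detA.
have diag : (A i0 i0 * A i1 i1) * A i2 i2 = 1 by rewrite -detA; ring.
have A00 : A i0 i0 != 0 by apply: (@rinv_neq0 _ (A i1 i1 * A i2 i2)); rewrite -diag; ring.
have A11 : A i1 i1 != 0 by apply: (@rinv_neq0 _ (A i0 i0 * A i2 i2)); rewrite -diag; ring.
exists (A i0 i0), (A i1 i1), (A i0 i1), (A i0 i2), (A i1 i2); split=> //.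
rewrite /tri; congr mk3.
by apply: (mulfI (mulf_neq0 A00 A11)); rewrite diag mulfV // mulf_neq0.
Qed.

Lemma tri_inv (d0 d1 u v w : F) : d0 != 0 -> d1 != 0 ->
  invmx (tri d0 d1 u v w) =
  tri d0^-1 d1^-1 (- u / (d0 * d1)) (u * w - v * d1) (- w * d0).
Proof. by move=> ? ?; apply: invmx_eq; rewrite /tri mk3_mul mk3_1; congr mk3; field_nz. Qed.

Lemma Bgrp_subgroup : subgroup Bgrp.
Proof.
split; first by move=> A [].
split; first by split; [rewrite /SL3 det1 | rewrite !mxE].
split=> [x y | x].
  case/Bgrp_param => [d0 [d1 [u [v [w [? ? ->]]]]]].
  case/Bgrp_param => [d0' [d1' [u' [v' [w' [? ? ->]]]]]].
  apply/Bgrp_param; exists (d0 * d0'), (d1 * d1'), (d0 * u' + u * d1'),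
    (d0 * v' + u * w' + v * (d0' * d1')^-1), (d1 * w' + w * (d0' * d1')^-1).
  by rewrite !mulf_neq0 //; split=> //; rewrite /tri mk3_mul; congr mk3; field_nz.
case/Bgrp_param => [d0 [d1 [u [v [w [? ? ->]]]]]]; rewrite tri_inv //.
by apply/Bgrp_param; do 5 eexists; split; last reflexivity; rewrite invr_eq0.
Qed.

Lemma Bgrp_closed : closed_subgroup Bgrp.
Proof.
split; first exact: Bgrp_subgroup.
exists (fun p => p = PVar F i1 i0 \/ p = PVar F i2 i0 \/ p = PVar F i2 i1) => A.
split; first by case=> SA [A10 [A20 A21]]; split=> // p [->|[->|->]].
case=> SA P; split=> //.
split; first exact: P _ (or_introl erefl).
split; first exact: P _ (or_intror (or_introl erefl)).
exact: P _ (or_intror (or_intror erefl)).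
Qed.

Lemma Ugrp_inv (x y z : F) :
  invmx (mk3 1 x y 0 1 z 0 0 1) = mk3 1 (-x) (x * z - y) 0 1 (-z) 0 0 1.
Proof. by apply: invmx_eq; rewrite mk3_mul mk3_1; congr mk3; ring. Qed.

(* B' <= U, U' <= Z and Z is abelian, so B is solvable of derived length 3. *)
Lemma Bgrp_solvable : solvable_grp Bgrp.
Proof.
have BU : msubset (derived Bgrp) Ugrp.
  apply: gen_sub.
  - move=> z [x [y [/Bgrp_param [d0 [d1 [u [v [w [? ? ->]]]]]] [Bg ->]]]].
    case/Bgrp_param: Bg => [d0' [d1' [u' [v' [w' [? ? ->]]]]]].
    rewrite /commutator !tri_inv // /tri !mk3_mul.
    by do 3 eexists; congr mk3; try reflexivity; field_nz.
  - by exists 0, 0, 0; rewrite mk3_1.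
  - move=> x y [a [b [c ->]]] [a' [b' [c' ->]]]; rewrite mk3_mul.
    by do 3 eexists; congr mk3; try reflexivity; ring.
  - by move=> x [a [b [c ->]]]; rewrite Ugrp_inv; do 3 eexists.
have UZ : msubset (derived Ugrp) Zgrp.
  apply: gen_sub.
  - move=> z [x [y [[a [b [c ->]]] [[a' [b' [c' ->]]] ->]]]].
    rewrite /commutator !Ugrp_inv !mk3_mul.
    by eexists; congr mk3; try reflexivity; ring.
  - by exists 0; rewrite mk3_1.
  - move=> x y [a ->] [a' ->]; rewrite mk3_mul.
    by eexists; congr mk3; try reflexivity; ring.
  - by move=> x [a ->]; rewrite Ugrp_inv; eexists; congr mk3; ring.
have Z1 : msubset (derived Zgrp) (fun z => z = 1%:M).
  apply: derived_trivial => _ _ [a ->] [a' ->].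
  by rewrite /commutator !Ugrp_inv !mk3_mul mk3_1; congr mk3; ring.
exists 3%N => x /= /(derived_mono (derived_mono BU)) /(derived_mono UZ); exact: Z1.
Qed.

End Borel.

(* B is connected: any two of its points are joined by a segment in coordinates. *)
Lemma Bgrp_connected (Fc : closedFieldType) : zconnected (@Bgrp Fc).
Proof.
apply: zconnected_of_curves => _ _ /Bgrp_param [d0 [d1 [u [v [w [? ? ->]]]]]]
  /Bgrp_param [d0' [d1' [u' [v' [w' [? ? ->]]]]]].
apply: triangular_segment => // s ? ?.
by apply/Bgrp_param; do 5 eexists; split; last reflexivity.
Qed.

Section RootGroups.
Variable F : fieldType.

Definition U01 (x : F) := mk3 1 x 0 0 1 0 0 0 1.
Definition U12 (x : F) := mk3 1 0 0 0 1 x 0 0 1.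
Definition U02 (x : F) := mk3 1 0 x 0 1 0 0 0 1.
Definition L10 (x : F) := mk3 1 0 0 x 1 0 0 0 1.
Definition L21 (x : F) := mk3 1 0 0 0 1 0 0 x 1.
Definition L20 (x : F) := mk3 1 0 0 0 1 0 x 0 1.

Lemma unip_Bgrp (x y z : F) : Bgrp (mk3 1 x y 0 1 z 0 0 1).
Proof. by split; [rewrite /SL3 det_mk3; ring | rewrite !mxE]. Qed.

Variable K : mset F.
Hypothesis sK : subgroup K.
Hypothesis BK : msubset (@Bgrp F) K.

Let K_mul x y : K x -> K y -> K (x *m y).
Proof. by case: sK => _ [_ [mul _]]; apply: mul. Qed.

Let K_unip (x y z : F) : K (mk3 1 x y 0 1 z 0 0 1).
Proof. exact/BK/unip_Bgrp. Qed.

Let K_unip_mul (x y z x' y' z' : F) A : K A ->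
  K (mk3 1 x y 0 1 z 0 0 1 *m A *m mk3 1 x' y' 0 1 z' 0 0 1).
Proof. by move=> KA; apply/K_mul/K_unip/K_mul/KA/K_unip. Qed.

Let K_det A : K A -> \det A = 1.
Proof. by case: sK => sub _ /sub. Qed.

Let K_conj_family w (V Y : F -> 'M[F]_3) : K w -> (forall x, K (V x)) ->
  (forall y, exists x, w *m V x = Y y *m w) -> forall y, K (Y y).
Proof. by move=> Kw KV EY y; have [x Ex] := EY y; exact: subgroup_conj sK Kw (KV x) Ex. Qed.

(* The root group L20 and U01 generate L21 (a commutator identity). *)
Let K_L21_of_L20 : (forall y, K (L20 y)) -> forall y, K (L21 y).
Proof.
move=> KL20 y; have -> : L21 y = L20 y *m U01 1 *m L20 (-y) *m U01 (-1).
  by rewrite /L21 /L20 /U01 !mk3_mul; congr mk3; ring.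
by apply/K_mul/K_unip/K_mul/KL20/K_mul/K_unip/KL20.
Qed.

(* Case A20 <> 0: reduce [A] to an antidiagonal-like matrix with U. *)
Let lower_root_col0 (a b c d e f g h i : F) :
  K (mk3 a b c d e f g h i) -> g != 0 -> forall y, K (L21 y).
Proof.
move=> KA g_neq0.
have [p [q [r [s E]]]] : exists p q r s,
    mk3 1 0 (-a/g) 0 1 (-d/g) 0 0 1 *m mk3 a b c d e f g h i *m
    mk3 1 (-h/g) (-i/g) 0 1 0 0 0 1 = mk3 0 p q 0 r s g 0 0.
  by rewrite !mk3_mul; do 4 eexists; congr mk3; try reflexivity; field_nz.
have Kw : K (mk3 0 p q 0 r s g 0 0) by rewrite -E; apply: K_unip_mul.
have det_w : g * (p * s - q * r) = 1 by rewrite -(K_det Kw) det_mk3; ring.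
have [r0 | r_neq0] := eqVneq r 0.
  have p_neq0 : p != 0 by apply: (@rinv_neq0 _ (g * s)); rewrite -det_w r0; ring.
  apply: K_L21_of_L20; apply: (K_conj_family (V := U01) (w := mk3 0 p 0 0 0 s g 0 0)).
  - have -> : mk3 0 p 0 0 0 s g 0 0 = mk3 1 0 0 0 1 0 0 0 1 *m
        mk3 0 p q 0 r s g 0 0 *m mk3 1 0 0 0 1 (-q/p) 0 0 1.
      by rewrite !mk3_mul r0; congr mk3; field_nz.
    exact: K_unip_mul.
  - by move=> x; apply: K_unip.
  - move=> y; exists (y * p / g); rewrite /U01 /L20 !mk3_mul; congr mk3; field_nz.
apply: (K_conj_family (V := U01) (w := mk3 0 0 (q - p * s / r) 0 r 0 g 0 0)).
- have -> : mk3 0 0 (q - p * s / r) 0 r 0 g 0 0 = mk3 1 (-p/r) 0 0 1 0 0 0 1 *m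
      mk3 0 p q 0 r s g 0 0 *m mk3 1 0 0 0 1 (-s/r) 0 0 1.
    by rewrite !mk3_mul; congr mk3; field_nz.
  exact: K_unip_mul.
- by move=> x; apply: K_unip.
- move=> y; exists (y * r / g); rewrite /U01 /L21 !mk3_mul; congr mk3; field_nz.
Qed.

Let lower_root_col1 (a b c d e f h i : F) :
  K (mk3 a b c d e f 0 h i) -> h != 0 ->
  (forall y, K (L10 y)) \/ (forall y, K (L21 y)).
Proof.
move=> KA h_neq0.
have [a' [c' [d' [f' E]]]] : exists a' c' d' f',
    mk3 1 0 (-b/h) 0 1 (-e/h) 0 0 1 *m mk3 a b c d e f 0 h i *m
    mk3 1 0 0 0 1 (-i/h) 0 0 1 = mk3 a' 0 c' d' 0 f' 0 h 0.
  by rewrite !mk3_mul; do 4 eexists; congr mk3; try reflexivity; field_nz.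
have Kw : K (mk3 a' 0 c' d' 0 f' 0 h 0) by rewrite -E; apply: K_unip_mul.
have det_w : h * (c' * d' - a' * f') = 1 by rewrite -(K_det Kw) det_mk3; ring.
have [d0 | d_neq0] := eqVneq d' 0.
  have a_neq0 : a' != 0 by apply: (@rinv_neq0 _ (- h * f')); rewrite -det_w d0; ring.
  right; apply: (K_conj_family (V := U12) (w := mk3 a' 0 0 0 0 f' 0 h 0)).
  - have -> : mk3 a' 0 0 0 0 f' 0 h 0 = mk3 1 0 0 0 1 0 0 0 1 *m
        mk3 a' 0 c' d' 0 f' 0 h 0 *m mk3 1 0 (-c'/a') 0 1 0 0 0 1.
      by rewrite !mk3_mul d0; congr mk3; field_nz.
    exact: K_unip_mul.
  - by move=> x; apply: K_unip.
  - move=> y; exists (y * f' / h); rewrite /U12 /L21 !mk3_mul; congr mk3; field_nz.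
left; apply: (K_conj_family (V := U02) (w := mk3 0 0 (c' - a' * f' / d') d' 0 0 0 h 0)).
- have -> : mk3 0 0 (c' - a' * f' / d') d' 0 0 0 h 0 = mk3 1 (-a'/d') 0 0 1 0 0 0 1 *m
      mk3 a' 0 c' d' 0 f' 0 h 0 *m mk3 1 0 (-f'/d') 0 1 0 0 0 1.
    by rewrite !mk3_mul; congr mk3; field_nz.
  exact: K_unip_mul.
- by move=> x; apply: K_unip.
- have c_neq0 : c' - a' * f' / d' != 0.
    by apply: (@rinv_neq0 _ (h * d')); rewrite -det_w; field.
  move=> y; exists (y * (c' - a' * f' / d') / d').
  by rewrite /U02 /L10 !mk3_mul; congr mk3; field_nz.
Qed.

Let lower_root_row1 (a b c d e f i : F) :
  K (mk3 a b c d e f 0 0 i) -> d != 0 -> forall y, K (L10 y).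
Proof.
move=> KA d_neq0.
have [p [q [r E]]] : exists p q r,
    mk3 1 (-a/d) 0 0 1 0 0 0 1 *m mk3 a b c d e f 0 0 i *m
    mk3 1 (-e/d) 0 0 1 0 0 0 1 = mk3 0 p q d 0 r 0 0 i.
  by rewrite !mk3_mul; do 3 eexists; congr mk3; try reflexivity; field_nz.
have Kw : K (mk3 0 p q d 0 r 0 0 i) by rewrite -E; apply: K_unip_mul.
have det_w : (- d * i) * p = 1 by rewrite -(K_det Kw) det_mk3; ring.
have p_neq0 := rinv_neq0 det_w.
have i_neq0 : i != 0 by apply: (@rinv_neq0 _ (- d * p)); rewrite -det_w; ring.
have KY : forall y, K (mk3 1 0 0 y 1 (- y * q / i) 0 0 1).
  apply: (K_conj_family (V := U01) (w := mk3 0 p q d 0 r 0 0 i)) => // [x|y].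
    exact: K_unip.
  exists (y * p / d); rewrite /U01 !mk3_mul; congr mk3; field_nz.
move=> y; have -> : L10 y = mk3 1 0 0 0 1 (y * q / i) 0 0 1 *m mk3 1 0 0 y 1 (- y * q / i) 0 0 1.
  by rewrite /L10 mk3_mul; congr mk3; field_nz.
exact/K_mul/KY/K_unip.
Qed.

(* Bruhat-type reduction: a subgroup strictly containing B contains one of the
   negative simple root groups. *)
Lemma lower_root_of_nonBorel A : K A -> ~ Bgrp A ->
  (forall y, K (L10 y)) \/ (forall y, K (L21 y)).
Proof.
move=> KA nBA; have SA : SL3 A := K_det KA.
move: KA; rewrite [A]mk3E => KA.
have [g0 | g_neq0] := eqVneq (A i2 i0) 0; last by right; exact: lower_root_col0 KA g_neq0.
move: KA; rewrite g0 => KA.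
have [h0 | h_neq0] := eqVneq (A i2 i1) 0; last exact: lower_root_col1 KA h_neq0.
move: KA; rewrite h0 => KA; left; apply: (lower_root_row1 KA).
by apply: contra_notN nBA => /eqP d0.
Qed.

End RootGroups.

Section BorelMaximal.
Variable F : fieldType.
Hypothesis two_neq0 : (2 : F) != 0.
Hypothesis three_neq0 : (3 : F) != 0.

Lemma diag_inv (a b c : F) : a != 0 -> b != 0 -> c != 0 ->
  invmx (mk3 a 0 0 0 b 0 0 0 c) = mk3 a^-1 0 0 0 b^-1 0 0 0 c^-1.
Proof. by move=> *; apply: invmx_eq; rewrite mk3_mul mk3_1; congr mk3; field_nz. Qed.

Lemma U01_inv (z : F) : invmx (U01 z) = U01 (-z).
Proof. by apply: invmx_eq; rewrite /U01 mk3_mul mk3_1; congr mk3; ring. Qed.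

Lemma L10_inv (z : F) : invmx (L10 z) = L10 (-z).
Proof. by apply: invmx_eq; rewrite /L10 mk3_mul mk3_1; congr mk3; ring. Qed.

Lemma U12_inv (z : F) : invmx (U12 z) = U12 (-z).
Proof. by apply: invmx_eq; rewrite /U12 mk3_mul mk3_1; congr mk3; ring. Qed.

Lemma L21_inv (z : F) : invmx (L21 z) = L21 (-z).
Proof. by apply: invmx_eq; rewrite /L21 mk3_mul mk3_1; congr mk3; ring. Qed.

(* The copy of SL_2 on the coordinates 0, 1 is perfect: the torus element
   diag(2, 1/2, 1) is a product of root elements, and it acts on the root
   groups by the invertible scalars 4 and 1/4. *)
Lemma nonsolvable_SL2_01 (K : mset F) :
  subgroup K -> (forall x, K (U01 x)) -> (forall x, K (L10 x)) -> ~ solvable_grp K.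
Proof.
move=> sK KU KL; have half_neq0 : (2 : F)^-1 != 0 by rewrite invr_eq0.
apply: (nonsolvable_of_perfect_pair (hm := mk3 2 0 0 0 2^-1 0 0 0 1)) sK KU KL _ _ _ _.
- by rewrite /U01 mk3_1 => /mk3_inj [_ /eqP]; rewrite oner_eq0.
- move=> S SU SL SM.
  have -> : (mk3 2 0 0 0 2^-1 0 0 0 1 : 'M[F]_3) =
      U01 2 *m L10 (- 2^-1) *m U01 2 *m U01 (-1) *m L10 1 *m U01 (-1).
    by rewrite /U01 /L10 !mk3_mul; congr mk3; field_nz.
  by apply/SM/SU/SM/SL/SM/SU/SM/SU/SM/SL/SU.
- move=> y; exists (y * 4 / 3); rewrite /commutator diag_inv ?oner_eq0 // U01_inv.
  by rewrite /U01 !mk3_mul; congr mk3; field_nz.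
- move=> y; exists (- y / 3); rewrite /commutator diag_inv ?oner_eq0 // L10_inv.
  by rewrite /L10 !mk3_mul; congr mk3; field_nz.
Qed.

Lemma nonsolvable_SL2_12 (K : mset F) :
  subgroup K -> (forall x, K (U12 x)) -> (forall x, K (L21 x)) -> ~ solvable_grp K.
Proof.
move=> sK KU KL; have half_neq0 : (2 : F)^-1 != 0 by rewrite invr_eq0.
apply: (nonsolvable_of_perfect_pair (hm := mk3 1 0 0 0 2 0 0 0 2^-1)) sK KU KL _ _ _ _.
- by rewrite /U12 mk3_1 => /mk3_inj [_ _ _ _ [_ /eqP]]; rewrite oner_eq0.
- move=> S SU SL SM.
  have -> : (mk3 1 0 0 0 2 0 0 0 2^-1 : 'M[F]_3) =
      U12 2 *m L21 (- 2^-1) *m U12 2 *m U12 (-1) *m L21 1 *m U12 (-1).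
    by rewrite /U12 /L21 !mk3_mul; congr mk3; field_nz.
  by apply/SM/SU/SM/SL/SM/SU/SM/SU/SM/SL/SU.
- move=> y; exists (y * 4 / 3); rewrite /commutator diag_inv ?oner_eq0 // U12_inv.
  by rewrite /U12 !mk3_mul; congr mk3; field_nz.
- move=> y; exists (- y / 3); rewrite /commutator diag_inv ?oner_eq0 // L21_inv.
  by rewrite /L21 !mk3_mul; congr mk3; field_nz.
Qed.

(* B is a maximal solvable subgroup: a larger subgroup contains a copy of SL_2. *)
Lemma Bgrp_maximal (K : mset F) :
  subgroup K -> solvable_grp K -> msubset (@Bgrp F) K -> mseteq K (@Bgrp F).
Proof.
move=> sK solK BK A; split=> [KA | /BK //]; apply: NNPP => nBA.
have KU (x y z : F) : K (mk3 1 x y 0 1 z 0 0 1) by apply/BK/unip_Bgrp.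
case: (lower_root_of_nonBorel sK BK KA nBA) => KL.
  by apply: (nonsolvable_SL2_01 sK _ KL) => // x; apply: KU.
by apply: (nonsolvable_SL2_12 sK _ KL) => // x; apply: KU.
Qed.

End BorelMaximal.

Section TheGroupH.
Variable F : fieldType.

Lemma Hgrp_tri (t a b : F) : mk3 t 0 a 0 1 b 0 0 t^-1 = tri t 1 0 a b.
Proof. by rewrite /tri mulr1. Qed.

Lemma Hgrp_Bgrp : msubset (@Hgrp F) (@Bgrp F).
Proof.
move=> _ [t [a [b [t_neq0 ->]]]]; rewrite Hgrp_tri.
by apply/Bgrp_param; exists t, 1, 0, a, b; rewrite oner_eq0.
Qed.

Lemma Hgrp_SL3 : msubset (@Hgrp F) (@SL3 F).
Proof. by move=> A /Hgrp_Bgrp []. Qed.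

Lemma Ngrp_Hgrp : msubset (@Ngrp F) (@Hgrp F).
Proof. by move=> _ [a [b ->]]; exists 1, a, b; rewrite invr1 oner_eq0. Qed.

Lemma Hgrp_subgroup : subgroup (@Hgrp F).
Proof.
split; first exact: Hgrp_SL3.
split; first by rewrite mk3_1; apply: Ngrp_Hgrp; exists 0, 0.
split=> [_ _ [t [a [b [t_neq0 ->]]]] [t' [a' [b' [t_neq0' ->]]]] | _ [t [a [b [t_neq0 ->]]]]].
  exists (t * t'), (t * a' + a * t'^-1), (b' + b * t'^-1); rewrite mulf_neq0 //.
  by split=> //; rewrite mk3_mul; congr mk3; field_nz.
exists t^-1, (-a), (- b * t); rewrite invr_eq0; split=> //.
by apply: invmx_eq; rewrite mk3_mul mk3_1; congr mk3; field_nz.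
Qed.

Lemma Hgrp_zclosed : zclosed (@Hgrp F).
Proof.
exists (fun p => p = PVar F i0 i1 \/ p = PVar F i1 i0 \/ p = PVar F i2 i0 \/
                 p = PVar F i2 i1 \/ p = PAdd (PVar F i1 i1) (PConst (-1))) => A.
split=> [HA | [SA P]].
  split; first exact: Hgrp_SL3.
  case: HA => [t [a [b [t_neq0 ->]]]] p.
  by case=> [->|[->|[->|[->|->]]]] /=; rewrite !mxE /= ?subrr.
move: (P _ (or_introl erefl)) (P _ (or_intror (or_introl erefl)))
  (P _ (or_intror (or_intror (or_introl erefl))))
  (P _ (or_intror (or_intror (or_intror (or_introl erefl)))))
  (P _ (or_intror (or_intror (or_intror (or_intror erefl))))) => /= A01 A10 A20 A21.
move/eqP; rewrite subr_eq0 => /eqP A11.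
move: SA; rewrite /SL3 [A]mk3E det_mk3 A01 A10 A20 A21 A11 => detA.
have diag : A i0 i0 * A i2 i2 = 1 by rewrite -detA; ring.
have A00 : A i0 i0 != 0 by apply: (@rinv_neq0 _ (A i2 i2)); rewrite -diag mulrC.
exists (A i0 i0), (A i0 i2), (A i1 i2); split=> //; congr mk3.
by apply: (mulfI A00); rewrite diag mulfV.
Qed.

Lemma Hgrp_closed : closed_subgroup (@Hgrp F).
Proof. by split; [exact: Hgrp_subgroup | exact: Hgrp_zclosed]. Qed.

Lemma Hgrp_solvable : solvable_grp (@Hgrp F).
Proof. exact: solvable_sub Hgrp_Bgrp (@Bgrp_solvable F). Qed.

End TheGroupH.

(* H is connected: segments in the coordinates (t, a, b) stay in H. *)
Lemma Hgrp_connected (F : closedFieldType) : zconnected (@Hgrp F).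
Proof.
apply: zconnected_of_curves => _ _ [t [a [b [t_neq0 ->]]]] [t' [a' [b' [t_neq0' ->]]]].
rewrite !Hgrp_tri; apply: triangular_segment; rewrite ?oner_eq0 // => s seg_neq0 _.
exists (segment t t').[s], (segment a a').[s], (segment b b').[s].
by split=> //; rewrite Hgrp_tri !segmentE !subrr !mulr0 !addr0.
Qed.

Section NormalizerH.
Variable F : fieldType.
Hypothesis two_neq0 : (2 : F) != 0.

(* The group M = T N of upper triangular matrices with A01 = 0; it will turn
   out to be the normalizer of H. *)
Definition Mgrp : mset F := fun A => Bgrp A /\ A i0 i1 = 0.

Lemma Mgrp_param (A : 'M[F]_3) :
  Mgrp A <-> exists d0 d1 v w, [/\ d0 != 0, d1 != 0 & A = tri d0 d1 0 v w].
Proof.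
split=> [[/Bgrp_param [d0 [d1 [u [v [w [? ? EA]]]]]] A01] | [d0 [d1 [v [w [? ? ->]]]]]].
  by exists d0, d1, v, w; split=> //; move: A01; rewrite EA mxE /= => ->.
by split; [apply/Bgrp_param; exists d0, d1, 0, v, w | rewrite mxE].
Qed.

Lemma Mgrp_inv (A : 'M[F]_3) : Mgrp A -> Mgrp (invmx A).
Proof.
case/Mgrp_param => [d0 [d1 [v [w [? ? ->]]]]]; rewrite tri_inv //.
apply/Mgrp_param; exists d0^-1, d1^-1, (- v * d1), (- w * d0).
by rewrite !invr_eq0; split=> //; rewrite /tri; congr mk3; field_nz.
Qed.

Lemma Mgrp_conj (g x : 'M[F]_3) : Mgrp g -> Mgrp x -> Mgrp (g *m x *m invmx g).
Proof.
case/Mgrp_param => [d0 [d1 [v [w [? ? ->]]]]] /Mgrp_param [e0 [e1 [v' [w' [? ? ->]]]]].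
rewrite tri_inv //; apply/Mgrp_param; exists e0, e1; do 2 eexists; split=> //.
by rewrite /tri !mk3_mul; congr mk3; try reflexivity; field_nz.
Qed.

Lemma Ngrp_Mgrp (A : 'M[F]_3) : Ngrp A -> Mgrp A.
Proof.
case=> a [b ->]; apply/Mgrp_param; exists 1, 1, a, b; rewrite oner_eq0.
by split=> //; rewrite /tri mulr1 invr1.
Qed.

Lemma unip_conj_bottom_row (A X : 'M[F]_3) (x y : F) :
  A *m mk3 1 0 x 0 1 y 0 0 1 = X *m A -> X i2 i0 = 0 -> X i2 i1 = 0 ->
  A i2 i0 * x + A i2 i1 * y = 0.
Proof.
move=> + X20 X21; rewrite [A]mk3E [X]mk3E !mk3_mul => /mk3_inj [_ _ _ _ [_ _ E20 E21 E22]].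
rewrite !mxE /=; move: E20 E21 E22; rewrite X20 X21 !mul0r !add0r.
set g := A i2 i0; set h := A i2 i1; set s := X i2 i2 => E20 E21 E22.
have [s1 | s_neq1] := eqVneq s 1; first by move: E22; rewrite s1 => E22; from_diff E22.
have s1_neq0 : s - 1 != 0 by rewrite subr_eq0.
have g0 : g = 0 by apply: (mulIf s1_neq0); rewrite mul0r; from_diff E20.
have h0 : h = 0 by apply: (mulIf s1_neq0); rewrite mul0r; from_diff E21.
by rewrite g0 h0 !mul0r addr0.
Qed.

Lemma normalizer_bottom_row (K : mset F) (A : 'M[F]_3) :
  msubset K (@Bgrp F) -> msubset (@Ngrp F) K -> normalizer K A ->
  A i2 i0 = 0 /\ A i2 i1 = 0.
Proof.
move=> KB NK NA.
have bottom (x y : F) : A i2 i0 * x + A i2 i1 * y = 0.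
  have [X /KB [_ [_ [X20 X21]]] EX] := normalizer_conj NA (NK _ (ex_intro _ x (ex_intro _ y erefl))).
  exact: unip_conj_bottom_row EX X20 X21.
by split; [move: (bottom 1 0) | move: (bottom 0 1)]; rewrite !mulr1 !mulr0 ?addr0 ?add0r.
Qed.

Definition torus2 : 'M[F]_3 := mk3 2 0 0 0 1 0 0 0 2^-1.

Lemma torus2_Hgrp : Hgrp torus2.
Proof. by exists 2, 0, 0. Qed.

Lemma torus2_conj (A : 'M[F]_3) (d0 d1 v w : F) :
  A i2 i0 = 0 -> A i2 i1 = 0 -> A *m torus2 = tri d0 d1 0 v w *m A ->
  [/\ A i0 i0 * (d0 - 2) = 0, A i0 i1 * (d0 - 1) = 0, A i1 i0 * (d1 - 2) = 0,
      A i1 i1 * (d1 - 1) = 0 & A i2 i2 / 2 = (d0 * d1)^-1 * A i2 i2].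
Proof.
move=> A20 A21; rewrite [A]mk3E A20 A21 /torus2 /tri !mk3_mul !mxE /=.
case/mk3_inj => E00 E01 _ E10 [E11 _ _ _ E22].
split; [from_diff E00 | from_diff E01 | from_diff E10 | from_diff E11 | from_diff E22].
Qed.

(* N_G(H) = M: the bottom row of a normalizing element vanishes off the
   diagonal, and conjugating [torus2] back into H forces A01 = A10 = 0;
   conversely M normalizes H by a direct computation. *)
Lemma normalizer_Hgrp (A : 'M[F]_3) : normalizer (@Hgrp F) A <-> Mgrp A.
Proof.
split=> [NA | ].
  have [SA _] := NA; have [A20 A21] := normalizer_bottom_row (@Hgrp_Bgrp F) (@Ngrp_Hgrp F) NA.
  have [X /[dup] HX [t [al [be [t_neq0 EX]]]] EA] := normalizer_conj NA torus2_Hgrp.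
  move: EA; rewrite EX Hgrp_tri => /(torus2_conj A20 A21) [_ E01 E10 _ E22].
  have i_neq0 : A i2 i2 != 0.
    apply: (@rinv_neq0 _ (A i0 i0 * A i1 i1 - A i0 i1 * A i1 i0)).
    by rewrite -SA [in RHS](mk3E A) det_mk3 A20 A21; ring.
  have t2 : t = 2.
    move: E22; rewrite mulr1 [RHS]mulrC => /(mulfI i_neq0) /(congr1 GRing.inv).
    by rewrite !invrK.
  have A01 : A i0 i1 = 0 by rewrite -E01 t2; ring.
  have A10 : A i1 i0 = 0 by rewrite -[RHS]oppr0 -E10; ring.
  by split; [split|].
apply: normalizer_of_stable => [g [[]] | g | g x]; [done | exact: Mgrp_inv |].
case/Mgrp_param => [d0 [d1 [v [w [? ? ->]]]]] [t [a [b [t_neq0 ->]]]].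
rewrite tri_inv // /tri !mk3_mul; exists t; do 2 eexists; split=> //.
by congr mk3; try reflexivity; field_nz.
Qed.

End NormalizerH.

Section Semidirect.
Variable F : fieldType.
Hypothesis two_neq0 : (2 : F) != 0.

Lemma Tdiag_param (A : 'M[F]_3) :
  Tdiag A <-> exists d0 d1, [/\ d0 != 0, d1 != 0 & A = tri d0 d1 0 0 0].
Proof.
split=> [[SA off] | [d0 [d1 [? ? ->]]]]; last first.
  split; first by rewrite /SL3 /tri det_mk3; field_nz.
  by move=> i j; elim/ord3P: i; elim/ord3P: j; rewrite // mxE.
have /Mgrp_param [d0 [d1 [v [w [? ? EA]]]]] : Mgrp A.
  by split; [split=> //; split; [|split] | ]; apply: off.
exists d0, d1; split=> //; move: (off i0 i2 isT) (off i1 i2 isT).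
by rewrite EA !mxE /= => v0 w0; rewrite v0 w0.
Qed.

Lemma normalizer_Hgrp_semidirect :
  is_semidirect (normalizer (@Hgrp F)) (@Tdiag F) (@Ngrp F).
Proof.
split; [|split].
- move=> A; rewrite normalizer_Hgrp //; split.
    case/Mgrp_param => d0 [d1 [v [w [? ? ->]]]].
    exists (tri d0 d1 0 0 0), (mk3 1 0 (v / d0) 0 1 (w / d1) 0 0 1).
    split; first by apply/Tdiag_param; exists d0, d1.
    split; first by do 2 eexists.
    by rewrite /tri mk3_mul; congr mk3; field_nz.
  case=> t [n [/Tdiag_param [d0 [d1 [? ? ->]]] [[a [b ->]] ->]]].
  apply/Mgrp_param; exists d0, d1, (d0 * a), (d1 * b); split=> //.
  by rewrite /tri mk3_mul; congr mk3; ring.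
- move=> x /Tdiag_param [d0 [d1 [? ? ->]]] [a [b /mk3_inj [-> _ _ _ [-> _ _ _ _]]]].
  by rewrite /tri mulr1 invr1 mk3_1.
- move=> t n /Tdiag_param [d0 [d1 [? ? ->]]] [a [b ->]].
  rewrite tri_inv // oppr0 !mul0r /tri !mk3_mul.
  by do 2 eexists; congr mk3; try reflexivity; field_nz.
Qed.

End Semidirect.

Section NormalizerM.
Variable F : fieldType.
Hypothesis two_neq0 : (2 : F) != 0.

Lemma Hgrp_Mgrp : msubset (@Hgrp F) (@Mgrp F).
Proof.
move=> _ [t [a [b [? ->]]]]; rewrite Hgrp_tri.
by apply/Mgrp_param; exists t, 1, a, b; rewrite oner_eq0.
Qed.

Lemma rho_SL3 : SL3 (rho F).
Proof. by rewrite /SL3 /rho det_mk3; ring. Qed.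

Lemma rho_involution : rho F *m rho F = 1%:M.
Proof. by rewrite /rho mk3_mul mk3_1; congr mk3; ring. Qed.

Lemma rho_inv : invmx (rho F) = rho F.
Proof. exact: invmx_eq rho_involution. Qed.

(* rho normalizes M: it swaps the first two diagonal entries. *)
Lemma rho_conj_Mgrp (A : 'M[F]_3) : Mgrp A -> Mgrp (rho F *m A *m rho F).
Proof.
case/Mgrp_param => d0 [d1 [v [w [? ? ->]]]].
apply/Mgrp_param; exists d1, d0, (-w), (-v); split=> //.
by rewrite /rho /tri !mk3_mul; congr mk3; field_nz.
Qed.

(* An element normalizing M lies in M or in rho M: conjugating [torus2] by it
   either fixes or swaps the first two eigenvalues 2 and 1. *)
Lemma normalizer_Mgrp_shape (A : 'M[F]_3) :
  normalizer (@Mgrp F) A -> Mgrp A \/ Mgrp (rho F *m A).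
Proof.
move=> NA; have [SA _] := NA.
have MB : msubset (@Mgrp F) (@Bgrp F) by move=> ? [].
have [A20 A21] := normalizer_bottom_row MB (@Ngrp_Mgrp F) NA.
have [X /Mgrp_param [f0 [f1 [v [w [_ _ EX]]]]] EA] :=
  normalizer_conj NA (Hgrp_Mgrp (torus2_Hgrp two_neq0)).
move: EA; rewrite EX => /(torus2_conj A20 A21) [E00 E01 E10 E11 _].
have detA : A i2 i2 * (A i0 i0 * A i1 i1 - A i0 i1 * A i1 i0) = 1.
  by rewrite -SA [in RHS](mk3E A) det_mk3 A20 A21; ring.
have root (x f c : F) : x * (f - c) = 0 -> x != 0 -> f = c.
  by move=> /eqP; rewrite mulf_eq0 subr_eq0 => /orP [/eqP -> /eqP // | /eqP].
have [a0 | a_neq0] := eqVneq (A i0 i0) 0.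
  have d_neq0 : A i1 i0 != 0.
    by apply: (@rinv_neq0 _ (- A i2 i2 * A i0 i1)); rewrite -detA a0; ring.
  have f12 := root _ _ _ E10 d_neq0.
  have e0 : A i1 i1 = 0 by rewrite -E11 f12; ring.
  right; split; last by rewrite /rho [A]mk3E mk3_mul !mxE /= e0; ring.
  split; first exact: SL3_mul rho_SL3 SA.
  by rewrite /rho [A]mk3E mk3_mul !mxE /= a0 A20 A21; split; [|split]; ring.
have f02 := root _ _ _ E00 a_neq0.
have b0 : A i0 i1 = 0 by rewrite -E01 f02; ring.
have e_neq0 : A i1 i1 != 0.
  by apply: (@rinv_neq0 _ (A i2 i2 * A i0 i0)); rewrite -detA b0; ring.
have f11 := root _ _ _ E11 e_neq0.
have d0 : A i1 i0 = 0 by rewrite -[RHS]oppr0 -E10 f11; ring.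
by left; split; first by split; last split.
Qed.

Lemma normalizer_Mgrp (A : 'M[F]_3) :
  normalizer (@Mgrp F) A <-> (Mgrp A \/ exists M, Mgrp M /\ A = rho F *m M).
Proof.
split=> [NA | MA].
  case: (normalizer_Mgrp_shape NA) => [MA | MrA]; [by left | right].
  by exists (rho F *m A); rewrite mulmxA rho_involution mul1mx.
apply: (normalizer_of_stable (S := fun B => Mgrp B \/ exists M, Mgrp M /\ B = rho F *m M)) MA.
- by move=> g [[[]]|[M [[[SM _] _] ->]]] //; apply: SL3_mul rho_SL3 SM.
- move=> g; case=> [Mg | [M [MM ->]]]; first by left; apply: Mgrp_inv.
  have SM : SL3 M by case: MM => [[]].
  right; exists (rho F *m invmx M *m rho F); split; first by apply/rho_conj_Mgrp/Mgrp_inv.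
  by rewrite (invmxM_SL3 rho_SL3 SM) rho_inv !mulmxA rho_involution mul1mx.
- move=> g x; case=> [Mg | [M [MM ->]]] Mx; first exact: Mgrp_conj.
  have SM : SL3 M by case: MM => [[]].
  rewrite (invmxM_SL3 rho_SL3 SM) rho_inv !mulmxA.
  have -> : rho F *m M *m x *m invmx M *m rho F = rho F *m (M *m x *m invmx M) *m rho F.
    by rewrite !mulmxA.
  exact/rho_conj_Mgrp/Mgrp_conj.
Qed.

End NormalizerM.

Section Spherical.
Variable F : fieldType.

(* A representative of the open B-orbit on G/H. *)
Definition g0 : 'M[F]_3 := mk3 0 0 1 1 0 0 1 1 0.

Lemma g0_SL3 : SL3 g0.
Proof. by rewrite /SL3 /g0 det_mk3; ring. Qed.

Definition big_cell : mset F :=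
  fun A => exists b h, Bgrp b /\ Hgrp h /\ A = b *m g0 *m h.

Lemma big_cell_minors (A : 'M[F]_3) : big_cell A ->
  [/\ A i2 i1 != 0, A i2 i0 != 0 & A i1 i1 * A i2 i0 - A i2 i1 * A i1 i0 != 0].
Proof.
case=> b [h [/Bgrp_param [d0 [d1 [u [v [w [? ? Eb]]]]]] [[t [a [c [? Eh]]]] EA]]].
have e_neq0 : (d0 * d1)^-1 != 0 by rewrite invr_eq0 mulf_neq0.
have entry (i j : 'I_3) : A i j = (tri d0 d1 u v w *m g0 *m mk3 t 0 a 0 1 c 0 0 t^-1) i j.
  by rewrite EA Eb Eh.
have E21 : A i2 i1 = (d0 * d1)^-1 by rewrite entry /tri /g0 !mk3_mul !mxE /=; ring.
have E20 : A i2 i0 = (d0 * d1)^-1 * t by rewrite entry /tri /g0 !mk3_mul !mxE /=; ring.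
have E11 : A i1 i1 = w by rewrite entry /tri /g0 !mk3_mul !mxE /=; ring.
have E10 : A i1 i0 = (d1 + w) * t by rewrite entry /tri /g0 !mk3_mul !mxE /=; ring.
rewrite E21 E20 E11 E10 mulf_neq0 //; split=> //.
have -> : w * ((d0 * d1)^-1 * t) - (d0 * d1)^-1 * ((d1 + w) * t) =
  - ((d0 * d1)^-1 * d1 * t) by ring.
by rewrite oppr_eq0 !mulf_neq0.
Qed.

Lemma big_cell_coords (a00 a01 a02 a11 a12 a21 a22 t k : F) :
  t != 0 -> k != 0 -> a21 != 0 ->
  SL3 (mk3 a00 a01 a02 ((k + a11) * t) a11 a12 (t * a21) a21 a22) ->
  big_cell (mk3 a00 a01 a02 ((k + a11) * t) a11 a12 (t * a21) a21 a22).
Proof.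
move=> t_neq0 k_neq0 a21_neq0 SA.
pose a := (a12 - a11 * (a22 / a21)) / k.
pose c := a22 / a21 - a.
pose b01 := a00 / t - a01.
pose b00 := t * (a02 - b01 * a - a01 * (a22 / a21)).
have E : mk3 a00 a01 a02 ((k + a11) * t) a11 a12 (t * a21) a21 a22 =
    mk3 b00 b01 a01 0 k a11 0 0 a21 *m g0 *m mk3 t 0 a 0 1 c 0 0 t^-1.
  by rewrite /g0 !mk3_mul /c /b00 /b01 /a; congr mk3; field_nz.
exists (mk3 b00 b01 a01 0 k a11 0 0 a21), (mk3 t 0 a 0 1 c 0 0 t^-1).
split; last by split=> //; exists t, a, c.
split; last by rewrite !mxE.
move: SA; rewrite /SL3 E !det_mulmx g0_SL3 mulr1 => SA.
by rewrite -[RHS]SA det_mk3 [in RHS]det_mk3; field_nz.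
Qed.

Lemma big_cell_of_minors (A : 'M[F]_3) : SL3 A ->
  A i2 i1 != 0 -> A i2 i0 != 0 -> A i1 i1 * A i2 i0 - A i2 i1 * A i1 i0 != 0 ->
  big_cell A.
Proof.
move=> SA a21_neq0 a20_neq0 minor_neq0.
pose t := A i2 i0 / A i2 i1; pose k := A i1 i0 / t - A i1 i1.
have t_neq0 : t != 0 by rewrite mulf_neq0 ?invr_eq0.
have k_neq0 : k != 0.
  have -> : k = - (A i1 i1 * A i2 i0 - A i2 i1 * A i1 i0) / A i2 i0 by rewrite /k /t; field_nz.
  by rewrite mulf_neq0 ?oppr_eq0 ?invr_eq0.
have EA : A = mk3 (A i0 i0) (A i0 i1) (A i0 i2) ((k + A i1 i1) * t) (A i1 i1) (A i1 i2)
                  (t * A i2 i1) (A i2 i1) (A i2 i2).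
  by rewrite [LHS]mk3E; congr mk3; rewrite /k /t; field_nz.
by move: SA; rewrite EA; apply: big_cell_coords.
Qed.

(* The complement of B g0 H in G is the zero set of one polynomial. *)
Definition big_cell_equation : mpoly F :=
  PMul (PMul (PVar F i2 i1) (PVar F i2 i0))
       (PAdd (PMul (PVar F i1 i1) (PVar F i2 i0))
             (PMul (PConst (-1)) (PMul (PVar F i2 i1) (PVar F i1 i0)))).

Lemma big_cell_equationE (A : 'M[F]_3) :
  peval big_cell_equation A =
  A i2 i1 * A i2 i0 * (A i1 i1 * A i2 i0 - A i2 i1 * A i1 i0).
Proof. by rewrite /= mulN1r. Qed.

Lemma big_cell_open : zopen big_cell.
Proof.
split=> [_ [b [h [[Sb _] [Hh ->]]]] | ].
  by apply/SL3_mul/Hgrp_SL3/Hh/SL3_mul/g0_SL3.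
exists (fun p => p = big_cell_equation) => A; split.
  case=> SA notcell; split=> // _ ->; rewrite big_cell_equationE.
  apply/eqP; apply: contra_notT notcell; rewrite !mulf_eq0 !negb_or.
  by case/andP => /andP [? ?] ?; apply: big_cell_of_minors.
case=> SA P; split=> // /big_cell_minors [n21 n20 n_minor]; move: (P _ erefl).
by rewrite big_cell_equationE => /eqP; rewrite !mulf_eq0 (negbTE n21) (negbTE n20) (negbTE n_minor).
Qed.

End Spherical.

Lemma Bgrp_borel (F : closedFieldType) :
  (2 : F) != 0 -> (3 : F) != 0 -> borel (@Bgrp F).
Proof.
move=> two_neq0 three_neq0; split; first exact: Bgrp_closed.
split; first exact: Bgrp_connected.
split; first exact: Bgrp_solvable.
by move=> K [sK _] _ solK BK; apply: Bgrp_maximal.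
Qed.

Lemma Hgrp_spherical (F : closedFieldType) :
  (2 : F) != 0 -> (3 : F) != 0 -> spherical (@Hgrp F).
Proof.
move=> two_neq0 three_neq0; split; first exact: Hgrp_closed.
exists (@Bgrp F); split; first exact: Bgrp_borel.
by exists (g0 F); split; [exact: g0_SL3 | exact: big_cell_open].
Qed.

Lemma normalizer_normalizer_Hgrp (F : fieldType) : (2 : F) != 0 ->
  mseteq (normalizer (normalizer (@Hgrp F)))
         (fun A => normalizer (@Hgrp F) A \/
                   exists M, normalizer (@Hgrp F) M /\ A = rho F *m M) /\
  ~ mseteq (normalizer (normalizer (@Hgrp F))) (normalizer (@Hgrp F)).
Proof.
move=> two_neq0; have NH := normalizer_Hgrp two_neq0.
have NNH := normalizer_ext NH.
have NNH_rho : normalizer (normalizer (@Hgrp F)) (rho F).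
  apply/NNH/(normalizer_Mgrp two_neq0); right; exists 1%:M; rewrite mulmx1; split=> //.
  by apply/Mgrp_param; exists 1, 1, 0, 0; rewrite oner_eq0 /tri mulr1 invr1 mk3_1.
split=> [A | E].
  rewrite NNH normalizer_Mgrp // NH.
  split=> [[MA | [M [MM ->]]] | [MA | [M [MM ->]]]].
  - by left.
  - by right; exists M; rewrite NH.
  - by left.
  - by right; exists M; rewrite -NH.
move/E/NH: NNH_rho => [_ /eqP]; rewrite /rho mxE /=; exact/negP/oner_neq0.
Qed.

Unset Implicit Arguments.

Theorem mainTheorem8 (F : closedFieldType) (charF0 : [pchar F] =i pred0) :
  closed_subgroup (@Hgrp F) /\ zconnected (@Hgrp F) /\
  solvable_grp (@Hgrp F) /\ spherical (@Hgrp F) /\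
  is_semidirect (normalizer (@Hgrp F)) (@Tdiag F) (@Ngrp F) /\
  mseteq (normalizer (normalizer (@Hgrp F)))
         (fun A => normalizer (@Hgrp F) A \/
                   exists M, normalizer (@Hgrp F) M /\ A = rho F *m M) /\
  ~ mseteq (normalizer (normalizer (@Hgrp F))) (normalizer (@Hgrp F)).
Proof.
have two_neq0 : (2 : F) != 0 by move/pcharf0P: charF0 => ->.
have three_neq0 : (3 : F) != 0 by move/pcharf0P: charF0 => ->.
split; first exact: Hgrp_closed.
split; first exact: Hgrp_connected.
split; first exact: Hgrp_solvable.
split; first exact: Hgrp_spherical.
split; first exact: normalizer_Hgrp_semidirect.
exact: normalizer_normalizer_Hgrp.
Qed.
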